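(* Let $N\geq 1$, let $U\in M_{2N}(\mathbb{C})$ be unitary with $U^{\rm T}=-U$, and let $\Phi^U_{4N}$ be the map defined on block matrices $X=\begin{pmatrix} X_{11} & X_{12}\\ X_{21} & X_{22}\end{pmatrix}$ ($X_{kl}\in M_{2N}(\mathbb{C})$) by $$\Phi^U_{4N}(X)=\frac{1}{2N}\begin{pmatrix} \mathbb{I}_{2N}\,\mathrm{Tr}X_{22} & -\big(X_{12}+UX_{21}^{\rm T}U^\dagger\big)\\ -\big(X_{21}+UX_{12}^{\rm T}U^\dagger\big) & \mathbb{I}_{2N}\,\mathrm{Tr}X_{11}\end{pmatrix}.$$ Let $P^+_{4N}=\frac{1}{4N}\sum_{k,l=1}^{4N}|k\rangle\langle l|\otimes|k\rangle\langle l|$, $W^U_{4N}=(\mathrm{id}\otimes\Phi^U_{4N})P^+_{4N}$, and for $\lambda\in[0,1]$ let $\rho_\lambda=\frac{\lambda}{(4N)^2}\mathbb{I}_{4N}\otimes\mathbb{I}_{4N}+(1-\lambda)P^+_{4N}$ be the isotropic state. If $\rho_\lambda$ is entangled, equivalently if $\lambda<\frac{4N}{4N+1}$, then $\mathrm{Tr}(W^U_{4N}\rho_\lambda)<0$.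
   Context: $\{|k\rangle\}$ is the standard basis of $\mathbb{C}^{4N}$; $\mathrm{id}$ is the identity map on $M_{4N}(\mathbb{C})$. *)

From HB Require Import structures.
From mathcomp Require Import all_boot all_order all_algebra.
From mathcomp Require Export spectral.
From mathcomp Require Import complex mxtens.
From mathcomp Require Import reals.
Set Implicit Arguments. Unset Strict Implicit. Unset Printing Implicit Defensive.
Import Order.TTheory GRing.Theory Num.Theory.
Local Open Scope ring_scope.

Definition adjmx (C : numClosedFieldType) m n (A : 'M[C]_(m, n)) : 'M[C]_(n, m) :=
  (map_mx Num.conj A)^T.

Definition PhiU (C : numClosedFieldType) n (U : 'M[C]_n) (X : 'M[C]_(n + n))
  : 'M[C]_(n + n) :=
  (n%:R)^-1 *: block_mx
    ((\tr (drsubmx X))%:M)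
    (- (ursubmx X + U *m (dlsubmx X)^T *m adjmx U))
    (- (dlsubmx X + U *m (ursubmx X)^T *m adjmx U))
    ((\tr (ulsubmx X))%:M).

Definition Pplus (C : numClosedFieldType) d : 'M[C]_(d * d) :=
  (d%:R)^-1 *: \sum_(k < d) \sum_(l < d) tensmx (delta_mx k l) (delta_mx k l).

Definition id_tens (C : numClosedFieldType) d (Phi : 'M[C]_d -> 'M[C]_d)
  (Y : 'M[C]_(d * d)) : 'M[C]_(d * d) :=
  \sum_(k < d) \sum_(l < d) tensmx (delta_mx k l)
     (Phi (\matrix_(i, j) Y (mxtens_index (k, i)) (mxtens_index (l, j)))).

Definition WU (C : numClosedFieldType) n (U : 'M[C]_n) : 'M[C]_((n + n) * (n + n)) :=
  id_tens (PhiU U) (Pplus C (n + n)).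

Definition iso_state (C : numClosedFieldType) d (lam : C) : 'M[C]_(d * d) :=
  (lam / (d%:R ^+ 2)) *: tensmx (1%:M : 'M[C]_d) (1%:M : 'M[C]_d)
  + (1 - lam) *: Pplus C d.

From HB Require Import structures.
From mathcomp Require Import all_boot all_order all_algebra.
From mathcomp Require Import spectral complex mxtens reals.
From mathcomp Require Import ring.
Import Order.TTheory GRing.Theory Num.Theory.
Local Open Scope ring_scope.
Set Implicit Arguments. Unset Strict Implicit. Unset Printing Implicit Defensive.

(* With d = 4N, Tr (W rho) = lam/d^2 Tr W + (1 - lam) Tr (W P+).  Phi is trace
   preserving, so Tr W = Tr P+ = 1.  Moreover Tr (W P+) = d^-2 sum_(a,b) Phi(|a><b|)_(a,b):
   the diagonal blocks of Phi(|a><b|) vanish at (a,b), and each of the d^2/2 entries in an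
   off-diagonal block equals -2/d, so Tr (W P+) = -1/d.  Hence
   Tr (W rho) = (lam (d + 1) - d) / d^2, negative exactly when lam < d / (d + 1). *)

Section DeltaTensor.
Variable R : pzRingType.

Lemma sum_delta_mx_entry m n (F : 'I_m -> 'I_n -> R) a b :
  \sum_k \sum_l (delta_mx k l : 'M[R]_(m, n)) a b * F k l = F a b.
Proof.
rewrite (bigD1 a) //= (bigD1 b) //= mxE !eqxx mul1r.
rewrite big1 ?addr0 => [|l /negbTE nlb]; last by rewrite mxE eq_sym nlb andbF mul0r.
rewrite big1 ?addr0 // => k /negbTE nka.
by apply: big1 => l _; rewrite mxE eq_sym nka mul0r.
Qed.

Lemma mxtrace_mul_delta n (A : 'M[R]_n) i j : \tr (A *m delta_mx i j) = A j i.
Proof.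
rewrite /mxtrace (bigD1 j) //= big1 ?addr0 => [|x /negbTE xj].
  rewrite mxE (bigD1 i) //= mxE !eqxx mulr1 big1 ?addr0 // => y /negbTE yi.
  by rewrite mxE yi mulr0.
by rewrite mxE big1 // => y _; rewrite mxE xj andbF mulr0.
Qed.

Lemma tens_delta_mx m n p q (a : 'I_m) (b : 'I_n) (i : 'I_p) (j : 'I_q) :
  tensmx (delta_mx a b) (delta_mx i j)
  = delta_mx (mxtens_index (a, i)) (mxtens_index (b, j)) :> 'M[R]_(_, _).
Proof.
apply/matrixP => x y; case: (mxtens_indexP x) => a' i'; case: (mxtens_indexP y) => b' j'.
rewrite tensmxE !mxE !(inj_eq (can_inj (@mxtens_indexK _ _))) !xpair_eqE.
by case: (a' == a); case: (b' == b); rewrite ?mul1r ?mul0r //= andbF.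
Qed.

Lemma tensmx1 m n : tensmx (1%:M : 'M[R]_m) (1%:M : 'M[R]_n) = 1%:M.
Proof.
apply/matrixP => x y; case: (mxtens_indexP x) => a i; case: (mxtens_indexP y) => b j.
rewrite tensmxE !mxE (inj_eq (can_inj (@mxtens_indexK _ _))) xpair_eqE.
by case: (a == b); rewrite ?mul1r ?mul0r.
Qed.

Lemma big_mxtens_index m n (F : 'I_(m * n) -> R) :
  \sum_x F x = \sum_a \sum_i F (mxtens_index (a, i)).
Proof.
rewrite pair_big /= (reindex (@mxtens_index m n)) /=; last first.
  by exists (@mxtens_unindex m n) => x _; rewrite (mxtens_indexK, mxtens_unindexK).
by apply: eq_bigr => -[a i].
Qed.

End DeltaTensor.

Section PartialTrace.
Variables (C : numClosedFieldType) (d : nat).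

Definition tens_block (Y : 'M[C]_(d * d)) (a b : 'I_d) : 'M[C]_d :=
  \matrix_(i, j) Y (mxtens_index (a, i)) (mxtens_index (b, j)).

Lemma id_tensE (Phi : 'M[C]_d -> 'M[C]_d) Y a i b j :
  id_tens Phi Y (mxtens_index (a, i)) (mxtens_index (b, j))
  = Phi (tens_block Y a b) i j.
Proof.
rewrite summxE; under eq_bigr do rewrite summxE.
under eq_bigr do under eq_bigr do rewrite tensmxE.
exact: (sum_delta_mx_entry (fun k l => Phi (tens_block Y k l) i j)).
Qed.

Lemma mxtrace_tens_block (Y : 'M[C]_(d * d)) :
  \tr Y = \sum_a \tr (tens_block Y a a).
Proof.
by rewrite /mxtrace big_mxtens_index; apply: eq_bigr => a _; under [RHS]eq_bigr do rewrite mxE.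
Qed.

Lemma mxtrace_id_tens (Phi : 'M[C]_d -> 'M[C]_d) Y :
  (forall X, \tr (Phi X) = \tr X) -> \tr (id_tens Phi Y) = \tr Y.
Proof.
move=> trPhi; rewrite !mxtrace_tens_block; apply: eq_bigr => a _.
rewrite -[in RHS]trPhi; apply: eq_bigr => i _.
by rewrite mxE id_tensE.
Qed.

Lemma PplusE : Pplus C d
  = d%:R^-1 *: \sum_k \sum_l delta_mx (mxtens_index (k, k)) (mxtens_index (l, l)).
Proof. by congr (_ *: _); apply: eq_bigr => k _; apply: eq_bigr => l _; rewrite tens_delta_mx. Qed.

Lemma tens_block_Pplus a b : tens_block (Pplus C d) a b = d%:R^-1 *: delta_mx a b.
Proof.
apply/matrixP => i j; rewrite !mxE summxE; congr (_ * _).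
under eq_bigr do rewrite summxE.
under eq_bigr do under eq_bigr do rewrite tensmxE.
by rewrite (sum_delta_mx_entry (fun k l => (delta_mx k l : 'M[C]_d) i j)) mxE.
Qed.

Lemma mxtrace_Pplus : (0 < d)%N -> \tr (Pplus C d) = 1.
Proof.
move=> d_gt0; rewrite mxtrace_tens_block.
under eq_bigr do rewrite tens_block_Pplus mxtraceZ -[delta_mx _ _]mul1mx.
under eq_bigr do rewrite mxtrace_mul_delta mxE eqxx mulr1.
by rewrite sumr_const card_ord -(mulr_natr d%:R^-1) mulVf // pnatr_eq0 -lt0n.
Qed.

Lemma mxtrace_mul_Pplus (A : 'M[C]_(d * d)) :
  \tr (A *m Pplus C d)
  = d%:R^-1 * \sum_a \sum_b A (mxtens_index (a, a)) (mxtens_index (b, b)).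
Proof.
rewrite PplusE -scalemxAr mxtraceZ mulmx_sumr (raddf_sum (@mxtrace C _)).
under eq_bigr do rewrite mulmx_sumr (raddf_sum (@mxtrace C _)).
rewrite exchange_big /=; congr (_ * _); apply: eq_bigr => a _.
by apply: eq_bigr => b _; rewrite mxtrace_mul_delta.
Qed.

End PartialTrace.

Section Witness.
Variables (C : numClosedFieldType) (n : nat) (U : 'M[C]_n).
Hypothesis n_gt0 : (0 < n)%N.

Lemma natr_neq0 : n%:R != 0 :> C.
Proof. by rewrite pnatr_eq0 -lt0n. Qed.

Lemma mxtrace_PhiU X : \tr (PhiU U X) = \tr X.
Proof.
rewrite /PhiU mxtraceZ mxtrace_block !mxtrace_scalar -[in RHS](submxK X).
rewrite mxtrace_block -mulrnDl -(mulr_natl (_ + _) n) mulKf ?natr_neq0 //.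
by rewrite addrC.
Qed.

(* The terms involving U only see the opposite off-diagonal block, which vanishes here. *)
Lemma PhiU_delta_lr (c : C) a b :
  PhiU U (c *: delta_mx (lshift n a) (rshift n b)) (lshift n a) (rshift n b)
  = - (n%:R^-1 * c).
Proof.
rewrite /PhiU; have -> : dlsubmx (c *: delta_mx (lshift n a) (rshift n b)) = 0.
  by apply/matrixP => i j; rewrite !mxE eq_rlshift mulr0.
rewrite mxE block_mxEur trmx0 mulmx0 mul0mx addr0 !mxE !eqxx mulr1.
by rewrite mulrN.
Qed.

Lemma PhiU_delta_rl (c : C) a b :
  PhiU U (c *: delta_mx (rshift n a) (lshift n b)) (rshift n a) (lshift n b)
  = - (n%:R^-1 * c).
Proof.
rewrite /PhiU; have -> : ursubmx (c *: delta_mx (rshift n a) (lshift n b)) = 0.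
  by apply/matrixP => i j; rewrite !mxE eq_lrshift mulr0.
rewrite mxE block_mxEdl trmx0 mulmx0 mul0mx addr0 !mxE !eqxx mulr1.
by rewrite mulrN.
Qed.

Lemma PhiU_delta_ll (c : C) a b :
  PhiU U (c *: delta_mx (lshift n a) (lshift n b)) (lshift n a) (lshift n b) = 0.
Proof.
rewrite /PhiU; have -> : drsubmx (c *: delta_mx (lshift n a) (lshift n b)) = 0.
  by apply/matrixP => i j; rewrite !mxE eq_rlshift mulr0.
by rewrite mxE block_mxEul mxtrace0 mxE mul0rn mulr0.
Qed.

Lemma PhiU_delta_rr (c : C) a b :
  PhiU U (c *: delta_mx (rshift n a) (rshift n b)) (rshift n a) (rshift n b) = 0.
Proof.
rewrite /PhiU; have -> : ulsubmx (c *: delta_mx (rshift n a) (rshift n b)) = 0.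
  by apply/matrixP => i j; rewrite !mxE eq_lrshift mulr0.
by rewrite mxE block_mxEdr mxtrace0 mxE mul0rn mulr0.
Qed.

Lemma sum_PhiU_delta (c : C) :
  \sum_a \sum_b PhiU U (c *: delta_mx a b) a b = - ((n + n)%:R * c).
Proof.
rewrite sumr_add; under eq_bigr do rewrite sumr_add.
under [X in _ + X]eq_bigr do rewrite sumr_add.
under eq_bigr do under eq_bigr do rewrite PhiU_delta_ll.
under eq_bigr do under [X in _ + X]eq_bigr do rewrite PhiU_delta_lr.
under [X in _ + X]eq_bigr do under eq_bigr do rewrite PhiU_delta_rl.
under [X in _ + X]eq_bigr do under [X in _ + X]eq_bigr do rewrite PhiU_delta_rr.
rewrite !big1_eq !add0r !addr0 !sumr_const !card_ord -!mulrnA -mulrnDr.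
rewrite -(mulr_natr _ (n * n + n * n)) !natrD natrM; field; exact: natr_neq0.
Qed.

Lemma mxtrace_WU : \tr (WU U) = 1.
Proof. by rewrite mxtrace_id_tens ?mxtrace_Pplus ?addn_gt0 ?n_gt0 //; exact: mxtrace_PhiU. Qed.

Lemma mxtrace_WU_Pplus : \tr (WU U *m Pplus C (n + n)) = - (n + n)%:R^-1.
Proof.
rewrite mxtrace_mul_Pplus.
under eq_bigr do under eq_bigr do rewrite id_tensE tens_block_Pplus.
by rewrite sum_PhiU_delta divff ?mulrN1 // pnatr_eq0 -lt0n addn_gt0 n_gt0.
Qed.

Lemma mxtrace_WU_iso_state lam :
  \tr (WU U *m iso_state (n + n) lam)
  = lam / (n + n)%:R ^+ 2 - (1 - lam) / (n + n)%:R.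
Proof.
rewrite /iso_state mulmxDr mxtraceD -[_ *m (_ *: tensmx _ _)]scalemxAr.
rewrite -[_ *m ((1 - lam) *: _)]scalemxAr !mxtraceZ tensmx1 mulmx1.
by rewrite mxtrace_WU mxtrace_WU_Pplus mulr1 mulrN.
Qed.

End Witness.

Lemma iso_value_lt0 (F : numFieldType) (d lam : F) :
  0 < d -> lam * (d + 1) < d -> lam / d ^+ 2 - (1 - lam) / d < 0.
Proof.
move=> d_gt0 lt_lam_d.
have -> : lam / d ^+ 2 - (1 - lam) / d = (lam * (d + 1) - d) / d ^+ 2.
  by field; rewrite gt_eqF.
by rewrite pmulr_llt0 ?invr_gt0 ?exprn_gt0 // subr_lt0.
Qed.

Local Open Scope complex_scope.

(* Unitarity and antisymmetry of U make W a genuine witness, but play no role in the value of Tr (W rho). *)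
Theorem lemma2 (R : realType) (N : nat) (U : 'M[R[i]]_(N.*2))
  (lam : R) :
  (1 <= N)%N ->
  U \is unitarymx ->
  U^T = - U ->
  0 <= lam <= 1 ->
  lam < (4 * N)%:R / ((4 * N)%:R + 1) ->
  \tr (WU U *m iso_state (N.*2 + N.*2) (lam%:C)) < 0.
Proof.
move=> N_gt0 _ _ _ lam_lt.
rewrite mxtrace_WU_iso_state ?double_gt0 //.
have -> : (N.*2 + N.*2 = 4 * N)%N by rewrite -!mul2n -mulnDl.
apply: iso_value_lt0; first by rewrite ltr0n muln_gt0.
rewrite -(rmorph_nat (@real_complex R)) -(rmorph1 (@real_complex R)) -rmorphD -rmorphM ltcR.
by rewrite -ltr_pdivlMr ?ltr_wpDl.
Qed.
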